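(* Let $(\mathcal{S},\mathcal{A},r,C,P,\mu,D)$ be a finite constrained Markov decision process with discount factor $\gamma\in[0,1)$, and let $P_m(s'|s,a)$ be a second (model) transition probability on the same finite state and action spaces. Let $\pi(a|s)$ and $\pi'(a|s)$ be arbitrary stochastic policies, and let $\Delta J(\pi,\pi') = J(\pi')-J(\pi)$ be the difference of their expected discounted returns under the true dynamics $P$. Then $$\frac{L^{\pi}_m(\pi')}{1-\gamma} - \frac{4\delta^{\max}\epsilon}{1-\gamma} \;\le\; \Delta J(\pi,\pi') \;\le\; \frac{L^{\pi}_m(\pi')}{1-\gamma} + \frac{4\delta^{\max}\epsilon}{1-\gamma},$$ where $$L^{\pi}_m(\pi') = \mathbb{E}_{s\sim d^{\pi}_m,\, a\sim\pi}\Big[\frac{\pi'(a|s)}{\pi(a|s)}A^{\pi}_m(s,a)\Big],\qquad \delta^{\max} = \max_{s,a,s'}\big|r(s,a,s')+\gamma V^{\pi}_m(s')-V^{\pi}_m(s)\big|,$$ $$\epsilon = \epsilon_\pi\epsilon_m + \frac{\gamma}{1-\gamma}\big(\epsilon_\pi^2 + 2\epsilon_\pi\epsilon_m\big),\quad \epsilon_\pi = \max_s D_{TV}\big(\pi'(\cdot|s)\,\|\,\pi(\cdot|s)\big),\quad \epsilon_m = \max_{s,a} D_{TV}\big(P(\cdot|s,a)\,\|\,P_m(\cdot|s,a)\big).$$ The same two-sided bound holds for the expected discounted cost returns of any cost function $c_i$, with $r$ replaced by $c_i$ throughout (i.e. $J$, $V^\pi_m$, $A^\pi_m$ replaced by $J_{c_i}$,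 $V^\pi_{m,c_i}$, $A^\pi_{m,c_i}$).
   Context: A finite CMDP $(\mathcal{S},\mathcal{A},r,C,P,\mu,D)$ has finite state space $\mathcal{S}$, finite action space $\mathcal{A}$, reward $r:\mathcal{S}\times\mathcal{A}\times\mathcal{S}\to\mathbb{R}$, a set $C$ of cost functions $c_i:\mathcal{S}\times\mathcal{A}\times\mathcal{S}\to\mathbb{R}$, transition probability $P(s'|s,a)$, start-state distribution $\mu$, and cost limits $D$. The start distribution $\mu$ is the same under $P$ and under the model $P_m$. For a policy $\pi$, $J(\pi)=\mathbb{E}_{\tau\sim(\pi,P)}[\sum_{t\ge0}\gamma^t r(s_t,a_t,s_{t+1})]$ with $s_0\sim\mu$, $a_t\sim\pi(\cdot|s_t)$, $s_{t+1}\sim P(\cdot|s_t,a_t)$; $J_{c_i}$ is defined analogously with $c_i$. Under model dynamics: $V^\pi_m(s)=\mathbb{E}_{\tau\sim(\pi,P_m)}[\sum_t\gamma^t r(s_t,a_t,s_{t+1})\mid s_0=s]$, $Q^\pi_m(s,a)$ the same conditioned additionally on $a_0=a$, and $A^\pi_m(s,a)=Q^\pi_m(s,a)-V^\pi_m(s)$; cost counterparts $V^\pi_{m,c_i}$, $A^\pi_{m,c_i}$ are defined with $c_i$ in place of $r$. The discounted model state distribution is $d^\pi_m(s)=(1-\gamma)\sum_{t\ge0}\gamma^t\Pr(S_t=s\mid \pi,P_m)$. The total variation distance is $D_{TV}(p\|q)=\frac12\sum_x|p(x)-q(x)|$. The importance-weighted expectation in $L^\pi_m(\pi')$ is understood as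 $\mathbb{E}_{s\sim d^\pi_m}[\sum_a \pi'(a|s)A^\pi_m(s,a)]$. *)

From HB Require Import structures.
From mathcomp Require Import all_boot all_order all_algebra.
From mathcomp Require Import all_classical all_reals all_analysis.
Set Implicit Arguments. Unset Strict Implicit. Unset Printing Implicit Defensive.
Import Order.TTheory GRing.Theory Num.Theory.
Import numFieldNormedType.Exports.
Local Open Scope ring_scope.

Section FiniteCMDP.
Variables (R : realType) (S A : finType).

Definition is_distr (T : finType) (p : T -> R) : Prop :=
  (forall x, 0 <= p x) /\ \sum_(x : T) p x = 1.

(* stochastic policy pi(a|s) = pi s a *)
Definition is_policy (pi : S -> A -> R) : Prop := forall s, is_distr (pi s).

(* transition kernel P(s'|s,a) = P s a s' *)
Definition is_kernel (P : S -> A -> S -> R) : Prop :=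
  forall s a, is_distr (P s a).

(* joint law of (S_t, A_t) under dynamics P and policy pi, started from the
   joint law rho0 of (S_0, A_0) *)
Fixpoint sa_law (P : S -> A -> S -> R) (pi : S -> A -> R)
    (rho0 : S -> A -> R) (t : nat) : S -> A -> R :=
  match t with
  | 0 => rho0
  | t'.+1 => fun s' a' =>
      (\sum_(s : S) \sum_(a : A) sa_law P pi rho0 t' s a * P s a s') * pi s' a'
  end.

Definition exp_step (P : S -> A -> S -> R) (pi : S -> A -> R)
    (f : S -> A -> S -> R) (rho0 : S -> A -> R) (t : nat) : R :=
  \sum_(s : S) \sum_(a : A) \sum_(s' : S) sa_law P pi rho0 t s a * P s a s' * f s a s'.

Definition disc_return (gamma : R) (P : S -> A -> S -> R) (pi : S -> A -> R)
    (f : S -> A -> S -> R) (rho0 : S -> A -> R) : R :=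
  limn (series (fun t => gamma ^+ t * exp_step P pi f rho0 t)).

(* J(pi) (or J_c(pi)) under dynamics P with s_0 ~ mu, a_t ~ pi *)
Definition Jret (gamma : R) (P : S -> A -> S -> R) (mu : S -> R)
    (pi : S -> A -> R) (f : S -> A -> S -> R) : R :=
  disc_return gamma P pi f (fun s a => mu s * pi s a).

(* V^pi_m(s) : s_0 = s, a_t ~ pi *)
Definition Vfun (gamma : R) (Pm : S -> A -> S -> R) (pi : S -> A -> R)
    (f : S -> A -> S -> R) (s : S) : R :=
  disc_return gamma Pm pi f (fun s0 a0 => (s0 == s)%:R * pi s0 a0).

(* Q^pi_m(s,a) : s_0 = s, a_0 = a, a_t ~ pi for t >= 1 *)
Definition Qfun (gamma : R) (Pm : S -> A -> S -> R) (pi : S -> A -> R)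
    (f : S -> A -> S -> R) (s : S) (a : A) : R :=
  disc_return gamma Pm pi f (fun s0 a0 => ((s0 == s) && (a0 == a))%:R).

Definition Afun (gamma : R) (Pm : S -> A -> S -> R) (pi : S -> A -> R)
    (f : S -> A -> S -> R) (s : S) (a : A) : R :=
  Qfun gamma Pm pi f s a - Vfun gamma Pm pi f s.

Definition dstate (gamma : R) (Pm : S -> A -> S -> R) (mu : S -> R)
    (pi : S -> A -> R) (s : S) : R :=
  (1 - gamma) * limn (series (fun t =>
     gamma ^+ t * \sum_(a : A) sa_law Pm pi (fun s0 a0 => mu s0 * pi s0 a0) t s a)).

Definition Lsurr (gamma : R) (Pm : S -> A -> S -> R) (mu : S -> R)
    (pi pi' : S -> A -> R) (f : S -> A -> S -> R) : R :=
  \sum_(s : S) dstate gamma Pm mu pi s *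
     \sum_(a : A) pi' s a * Afun gamma Pm pi f s a.

Definition dTV (T : finType) (p q : T -> R) : R :=
  2^-1 * \sum_(x : T) `|p x - q x|.

Definition eps_pi (pi pi' : S -> A -> R) : R :=
  \big[Num.max/0]_(s : S) dTV (pi' s) (pi s).

Definition eps_m (P Pm : S -> A -> S -> R) : R :=
  \big[Num.max/0]_(sa : S * A) dTV (P sa.1 sa.2) (Pm sa.1 sa.2).

Definition delta_max (gamma : R) (Pm : S -> A -> S -> R) (pi : S -> A -> R)
    (f : S -> A -> S -> R) : R :=
  \big[Num.max/0]_(x : S * A * S)
     `|f x.1.1 x.1.2 x.2 + gamma * Vfun gamma Pm pi f x.2
        - Vfun gamma Pm pi f x.1.1|.

Definition eps_total (gamma : R) (P Pm : S -> A -> S -> R) (pi pi' : S -> A -> R) : R :=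
  eps_pi pi pi' * eps_m P Pm
  + gamma / (1 - gamma) * (eps_pi pi pi' ^+ 2 + 2 * eps_pi pi pi' * eps_m P Pm).

Definition two_sided_bound (gamma : R) (P Pm : S -> A -> S -> R) (mu : S -> R)
    (pi pi' : S -> A -> R) (f : S -> A -> S -> R) : Prop :=
  let dJ := Jret gamma P mu pi' f - Jret gamma P mu pi f in
  let L := Lsurr gamma Pm mu pi pi' f in
  let err := 4 * delta_max gamma Pm pi f * eps_total gamma P Pm pi pi' in
  L / (1 - gamma) - err / (1 - gamma) <= dJ /\
  dJ <= L / (1 - gamma) + err / (1 - gamma).

End FiniteCMDP.

From HB Require Import structures.
From mathcomp Require Import all_boot all_order all_algebra.
From mathcomp Require Import all_classical all_reals all_analysis.
From mathcomp Require Import ring lra.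
Import Order.TTheory GRing.Theory Num.Theory.
Import numFieldNormedType.Exports.
Local Open Scope ring_scope.
Set Implicit Arguments. Unset Strict Implicit. Unset Printing Implicit Defensive.

(* Let d(s,a,s') = f(s,a,s') + gamma V(s') - V(s) be the temporal-difference error of
   V = V^pi_m, and n_sigma^K the discounted state occupancy of sigma under K, i.e. the
   solution of n = mu + gamma n K_sigma.  Telescoping against V gives
   J(sigma) = E_mu V + sum_s n_sigma^P(s) E_{a~sigma, s'~P} d, while
   L/(1-gamma) = sum_s n_pi^Pm(s) E_{a~pi', s'~Pm} d and E_{a~pi, s'~Pm} d = 0.
   Expanding the one-step means bilinearly in (pi' - pi, P - Pm) writes dJ - L/(1-gamma)
   as three sums, with weights n_pi'^P, n_pi'^P - n_pi^P and n_pi'^P - n_pi^Pm and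
   one-step factors bounded by 4 eps_pi eps_m delta, 2 eps_m delta and 2 eps_pi delta.
   The first weight has mass 1/(1-gamma); comparing the fixed-point equations bounds the
   l1 norms of the other two by 2 gamma eps_pi / (1-gamma)^2 and
   2 gamma (eps_pi + eps_m) / (1-gamma)^2. *)

Section FiniteSumLimits.
Variable R : realType.
Local Open Scope classical_set_scope.

Lemma cvgn_sum (I : finType) (u : I -> R ^nat) : (forall i, cvgn (u i)) ->
  (fun n => \sum_i u i n) @ \oo --> \sum_i limn (u i).
Proof. by move=> cu; apply: cvg_big => //; exact: add_continuous. Qed.

Lemma limn_sum (I : finType) (u : I -> R ^nat) : (forall i, cvgn (u i)) ->
  limn (fun n => \sum_i u i n) = \sum_i limn (u i).
Proof. by move=> /cvgn_sum /cvg_lim; apply. Qed.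

Lemma seriesMl (c : R) (u : R ^nat) : series (fun n => c * u n) = fun n => c * series u n.
Proof. by apply/funext => n; rewrite /series /= mulr_sumr. Qed.

Lemma lim_seriesMl (c : R) (u : R ^nat) : cvgn (series u) ->
  limn (series (fun n => c * u n)) = c * limn (series u).
Proof. by move=> cu; rewrite seriesMl; apply/cvg_lim => //; exact: cvgMl_tmp. Qed.

Lemma series_sum (I : finType) (u : I -> R ^nat) :
  series (fun t => \sum_i u i t) = fun n => \sum_i series (u i) n.
Proof. by apply/funext => n; rewrite /series /= exchange_big. Qed.

Lemma lim_series_sum (I : finType) (u : I -> R ^nat) : (forall i, cvgn (series (u i))) ->
  limn (series (fun t => \sum_i u i t)) = \sum_i limn (series (u i)).
Proof. by move=> cu; rewrite series_sum limn_sum. Qed.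

Lemma lim_series_lincomb (I : finType) (c : I -> R) (u : I -> R ^nat) :
  (forall i, cvgn (series (u i))) ->
  limn (series (fun t => \sum_i c i * u i t)) = \sum_i c i * limn (series (u i)).
Proof.
move=> cu; rewrite lim_series_sum => [|i]; first by apply: eq_bigr => i _; exact: lim_seriesMl.
by rewrite seriesMl; exact: is_cvgMl_tmp.
Qed.

Lemma lim_series_shift (u : R ^nat) : cvgn (series u) ->
  limn (series u) = u 0%N + limn (series (fun n => u n.+1)).
Proof.
move=> cu.
have -> : series (fun n => u n.+1) = fun n => series u n.+1 - u 0%N.
  by apply/funext => n; rewrite /series /= big_nat_recl // addrC addKr.
have cS : (fun n => series u n.+1 - u 0%N) @ \oo --> limn (series u) - u 0%N.
  by apply: cvgB; [rewrite (cvg_shiftS (series u)) | exact: cvg_cst].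
by rewrite (cvg_lim _ cS) // addrC subrK.
Qed.

End FiniteSumLimits.

Section StateActionLaw.
Variables (R : realType) (S A : finType).
Variables (K : S -> A -> S -> R) (pi : S -> A -> R).
Hypotheses (HK : is_kernel K) (Hpi : is_policy pi).
Implicit Types (rho : S -> A -> R).

Lemma sa_law_l1_le rho t :
  \sum_s \sum_a `|sa_law K pi rho t s a| <= \sum_s \sum_a `|rho s a|.
Proof.
elim: t => [|t IH] //=; apply: le_trans IH.
have -> : \sum_s \sum_a `|(\sum_s0 \sum_a0 sa_law K pi rho t s0 a0 * K s0 a0 s) * pi s a|
    = \sum_s `|\sum_s0 \sum_a0 sa_law K pi rho t s0 a0 * K s0 a0 s|.
  apply: eq_bigr => s _; under eq_bigr do rewrite normrM (ger0_norm ((Hpi s).1 _)).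
  by rewrite -mulr_sumr (Hpi s).2 mulr1.
apply: (@le_trans _ _ (\sum_s \sum_s0 \sum_a0 `|sa_law K pi rho t s0 a0| * K s0 a0 s)).
  apply: ler_sum => s _; apply: le_trans (ler_norm_sum _ _ _) _.
  apply: ler_sum => s0 _; apply: le_trans (ler_norm_sum _ _ _) _.
  by apply: ler_sum => a0 _; rewrite normrM (ger0_norm ((HK s0 a0).1 _)).
rewrite exchange_big /=; apply: ler_sum => s0 _.
rewrite exchange_big /=; apply: ler_sum => a0 _.
by rewrite -mulr_sumr (HK s0 a0).2 mulr1.
Qed.

Lemma sa_law_norm_le rho t s a :
  `|sa_law K pi rho t s a| <= \sum_s \sum_a `|rho s a|.
Proof.
apply: le_trans (sa_law_l1_le rho t).
rewrite (bigD1 s) //= (bigD1 a) //= -addrA lerDl.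
by apply: addr_ge0; apply: sumr_ge0 => *; [|apply: sumr_ge0].
Qed.

Lemma sa_law_ge0 rho t s a : (forall s a, 0 <= rho s a) -> 0 <= sa_law K pi rho t s a.
Proof.
move=> rho_ge0; elim: t s a => [|t IH] s a //=.
apply: mulr_ge0; last exact: (Hpi s).1.
by do 2 apply: sumr_ge0 => *; apply: mulr_ge0 => //; exact: (HK _ _).1.
Qed.

Lemma sa_law_lincomb (I : finType) (w : I -> R) (rho : I -> S -> A -> R) t s a :
  sa_law K pi (fun s a => \sum_i w i * rho i s a) t s a =
  \sum_i w i * sa_law K pi (rho i) t s a.
Proof.
elim: t s a => [|t IH] s a //=.
transitivity ((\sum_i w i * \sum_s0 \sum_a0 sa_law K pi (rho i) t s0 a0 * K s0 a0 s) * pi s a).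
  congr (_ * _); under eq_bigr do under eq_bigr do rewrite IH mulr_suml.
  under eq_bigr do rewrite exchange_big /=.
  rewrite exchange_big /=; apply: eq_bigr => i _; rewrite mulr_sumr.
  by apply: eq_bigr => s0 _; rewrite mulr_sumr; apply: eq_bigr => a0 _; rewrite mulrA.
by rewrite mulr_suml; apply: eq_bigr => i _; rewrite mulrA.
Qed.

Lemma sa_lawS rho t s a : sa_law K pi rho t.+1 s a = sa_law K pi (sa_law K pi rho 1) t s a.
Proof.
elim: t s a => [|t IH] s a //=.
by congr (_ * _); apply: eq_bigr => s0 _; apply: eq_bigr => a0 _; rewrite -IH.
Qed.

End StateActionLaw.

Section OneStepMeans.
Variables (R : realType) (S A : finType).
Implicit Types (K : S -> A -> S -> R) (sigma : S -> A -> R) (d : S -> A -> S -> R).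

Definition kernel_mean K d s a : R := \sum_s' K s a s' * d s a s'.

Definition step_mean sigma K d s : R := \sum_a sigma s a * kernel_mean K d s a.

Definition state_kernel sigma K s s' : R := \sum_a sigma s a * K s a s'.

Lemma step_meanBl sigma1 sigma2 K d s :
  step_mean (fun s a => sigma1 s a - sigma2 s a) K d s =
  step_mean sigma1 K d s - step_mean sigma2 K d s.
Proof. by rewrite /step_mean -sumrB; apply: eq_bigr => a _; rewrite mulrBl. Qed.

Lemma step_meanBr sigma K1 K2 d s :
  step_mean sigma (fun s a s' => K1 s a s' - K2 s a s') d s =
  step_mean sigma K1 d s - step_mean sigma K2 d s.
Proof.
rewrite /step_mean /kernel_mean -sumrB; apply: eq_bigr => a _.
by rewrite -mulrBr -sumrB; congr (_ * _); apply: eq_bigr => s' _; rewrite mulrBl.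
Qed.

Lemma norm_step_mean_le sigma K d s (c b m : R) :
  0 <= b -> 0 <= m ->
  \sum_a `|sigma s a| <= c ->
  (forall a, \sum_s' `|K s a s'| <= b) ->
  (forall a s', `|d s a s'| <= m) ->
  `|step_mean sigma K d s| <= c * b * m.
Proof.
move=> b_ge0 m_ge0 sigma_le K_le d_le.
have km_le a : `|kernel_mean K d s a| <= b * m.
  apply: le_trans (ler_norm_sum _ _ _) _.
  apply: (@le_trans _ _ (\sum_s' `|K s a s'| * m)); last by rewrite -mulr_suml ler_wpM2r.
  by apply: ler_sum => s' _; rewrite normrM ler_wpM2l.
apply: le_trans (ler_norm_sum _ _ _) _.
apply: (@le_trans _ _ (\sum_a `|sigma s a| * (b * m))); last first.
  by rewrite -mulr_suml -mulrA ler_wpM2r ?mulr_ge0.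
by apply: ler_sum => a _; rewrite normrM ler_wpM2l.
Qed.

Lemma state_kernel_ge0 sigma K s s' :
  is_kernel K -> is_policy sigma -> 0 <= state_kernel sigma K s s'.
Proof.
by move=> HK Hsigma; apply: sumr_ge0 => a _; rewrite mulr_ge0 ?(Hsigma s).1 ?(HK s a).1.
Qed.

Lemma state_kernel_sum1 sigma K s :
  is_kernel K -> is_policy sigma -> \sum_s' state_kernel sigma K s s' = 1.
Proof.
move=> HK Hsigma; rewrite /state_kernel exchange_big /= -(Hsigma s).2.
by apply: eq_bigr => a _; rewrite -mulr_sumr (HK s a).2 mulr1.
Qed.

Lemma state_kernel_l1_diff sigma1 sigma2 K1 K2 s (c b : R) :
  is_kernel K1 -> is_policy sigma2 ->
  \sum_a `|sigma1 s a - sigma2 s a| <= c ->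
  (forall a, \sum_s' `|K1 s a s' - K2 s a s'| <= b) ->
  \sum_s' `|state_kernel sigma1 K1 s s' - state_kernel sigma2 K2 s s'| <= c + b.
Proof.
move=> HK1 Hsigma2 sigma_le K_le.
apply: (@le_trans _ _ (\sum_s' \sum_a
    (`|sigma1 s a - sigma2 s a| * K1 s a s' + sigma2 s a * `|K1 s a s' - K2 s a s'|))).
  apply: ler_sum => s' _; rewrite /state_kernel -sumrB.
  apply: le_trans (ler_norm_sum _ _ _) _; apply: ler_sum => a _.
  have -> : sigma1 s a * K1 s a s' - sigma2 s a * K2 s a s' =
      (sigma1 s a - sigma2 s a) * K1 s a s' + sigma2 s a * (K1 s a s' - K2 s a s') by ring.
  apply: le_trans (ler_normD _ _) _.
  by rewrite !normrM (ger0_norm ((HK1 s a).1 s')) (ger0_norm ((Hsigma2 s).1 a)).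
rewrite exchange_big /=; under eq_bigr do rewrite big_split /=.
rewrite big_split /=; apply: lerD.
  by under eq_bigr => a _ do rewrite -mulr_sumr (HK1 s a).2 mulr1.
apply: (@le_trans _ _ (\sum_a sigma2 s a * b)); last by rewrite -mulr_suml (Hsigma2 s).2 mul1r.
by apply: ler_sum => a _; rewrite -mulr_sumr ler_wpM2l ?(Hsigma2 s).1.
Qed.

End OneStepMeans.

Section Occupancy.
Local Open Scope classical_set_scope.
Variables (R : realType) (S A : finType) (gamma : R).
Hypotheses (gamma_ge0 : 0 <= gamma) (gamma_lt1 : gamma < 1).
Variables (K : S -> A -> S -> R) (pi : S -> A -> R).
Hypotheses (HK : is_kernel K) (Hpi : is_policy pi).
Implicit Types (rho : S -> A -> R) (f : S -> A -> S -> R).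

Definition occ rho s a : R := limn (series (fun t => gamma ^+ t * sa_law K pi rho t s a)).

Lemma is_cvg_occ rho s a : cvgn (series (fun t => gamma ^+ t * sa_law K pi rho t s a)).
Proof.
apply: normed_cvg; set m := \sum_s \sum_a `|rho s a|.
have m_ge0 : 0 <= m by do 2 apply: sumr_ge0 => *.
apply: (@series_le_cvg _ _ (geometric m gamma)) => [n|n|n|].
- exact: normr_ge0.
- by rewrite /geometric /= mulr_ge0 // exprn_ge0.
- rewrite /geometric /= normrM ger0_norm ?exprn_ge0 // mulrC.
  by apply: ler_wpM2r; [exact: exprn_ge0 | exact: sa_law_norm_le].
- by apply: is_cvg_geometric_series; rewrite ger0_norm.
Qed.

Lemma lim_series_occ (c : S -> A -> R) rho :
  limn (series (fun t => \sum_s \sum_a c s a * (gamma ^+ t * sa_law K pi rho t s a))) =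
  \sum_s \sum_a c s a * occ rho s a.
Proof.
have -> : (fun t => \sum_s \sum_a c s a * (gamma ^+ t * sa_law K pi rho t s a)) =
    (fun t => \sum_(p : S * A) c p.1 p.2 * (gamma ^+ t * sa_law K pi rho t p.1 p.2)).
  by apply/funext => t; rewrite pair_big.
by rewrite lim_series_lincomb ?pair_big // => p; exact: is_cvg_occ.
Qed.

Lemma occ_ge0 rho s a : (forall s a, 0 <= rho s a) -> 0 <= occ rho s a.
Proof.
move=> rho_ge0; apply: limr_ge; first exact: is_cvg_occ.
apply: nearW => n; apply: sumr_ge0 => t _.
by rewrite mulr_ge0 ?exprn_ge0 ?sa_law_ge0.
Qed.

Lemma occ_lincomb (I : finType) (w : I -> R) (rho : I -> S -> A -> R) s a :
  occ (fun s a => \sum_i w i * rho i s a) s a = \sum_i w i * occ (rho i) s a.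
Proof.
rewrite /occ -lim_series_lincomb => [|i]; last exact: is_cvg_occ.
congr (lim (series _ @ \oo)); apply/funext => t.
by rewrite sa_law_lincomb mulr_sumr; apply: eq_bigr => i _; rewrite mulrCA.
Qed.

Lemma occ_first_step rho s a : occ rho s a = rho s a + gamma * occ (sa_law K pi rho 1) s a.
Proof.
rewrite /occ lim_series_shift ?expr0 ?mul1r; last exact: is_cvg_occ.
rewrite -lim_seriesMl; last exact: is_cvg_occ.
congr (_ + lim (series _ @ \oo)); apply/funext => n; cbv beta.
by rewrite sa_lawS exprS mulrA.
Qed.

Lemma occ_flow rho s' a' :
  occ rho s' a' = rho s' a' + gamma * (\sum_s \sum_a occ rho s a * K s a s') * pi s' a'.
Proof.
rewrite {1}/occ lim_series_shift ?expr0 ?mul1r; last exact: is_cvg_occ.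
congr (_ + _); transitivity (limn (series (fun n =>
    \sum_s \sum_a (gamma * pi s' a' * K s a s') * (gamma ^+ n * sa_law K pi rho n s a)))).
  congr (lim (series _ @ \oo)); apply/funext => n /=.
  rewrite exprS mulr_suml mulr_sumr; apply: eq_bigr => s _.
  by rewrite mulr_suml mulr_sumr; apply: eq_bigr => a _; ring.
rewrite lim_series_occ mulrAC mulr_sumr; apply: eq_bigr => s _.
by rewrite mulr_sumr; apply: eq_bigr => a _; ring.
Qed.

Lemma disc_return_occ f rho :
  disc_return gamma K pi f rho = \sum_s \sum_a kernel_mean K f s a * occ rho s a.
Proof.
rewrite /disc_return -lim_series_occ; congr (lim (series _ @ \oo)); apply/funext => t.
rewrite /exp_step mulr_sumr; apply: eq_bigr => s _; rewrite mulr_sumr; apply: eq_bigr => a _.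
by rewrite /kernel_mean mulr_sumr mulr_suml; apply: eq_bigr => s' _; ring.
Qed.

Lemma disc_return_lincomb f (I : finType) (w : I -> R) (rho : I -> S -> A -> R) :
  disc_return gamma K pi f (fun s a => \sum_i w i * rho i s a) =
  \sum_i w i * disc_return gamma K pi f (rho i).
Proof.
rewrite disc_return_occ.
transitivity (\sum_i \sum_s \sum_a w i * (kernel_mean K f s a * occ (rho i) s a)).
  rewrite [RHS]exchange_big; apply: eq_bigr => s _.
  rewrite [RHS]exchange_big; apply: eq_bigr => a _.
  by rewrite occ_lincomb mulr_sumr; apply: eq_bigr => i _; ring.
apply: eq_bigr => i _; rewrite disc_return_occ mulr_sumr.
by apply: eq_bigr => s _; rewrite mulr_sumr.
Qed.

Lemma disc_return_first_step f rho :
  disc_return gamma K pi f rho =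
  \sum_s \sum_a rho s a * kernel_mean K f s a
  + gamma * disc_return gamma K pi f (sa_law K pi rho 1).
Proof.
rewrite !disc_return_occ mulr_sumr -big_split /=; apply: eq_bigr => s _.
rewrite mulr_sumr -big_split /=; apply: eq_bigr => a _.
by rewrite [occ rho s a]occ_first_step; ring.
Qed.

End Occupancy.

Lemma sum_indicatorM (R : pzSemiRingType) (T : finType) (y : T) (g : T -> R) :
  \sum_x (x == y)%:R * g x = g y.
Proof. by rewrite (bigD1 y) //= eqxx mul1r big1 ?addr0 // => x /negbTE ->; rewrite mul0r. Qed.

Section Bellman.
Variables (R : realType) (S A : finType) (gamma : R).
Hypotheses (gamma_ge0 : 0 <= gamma) (gamma_lt1 : gamma < 1).
Variables (K : S -> A -> S -> R) (pi : S -> A -> R) (f : S -> A -> S -> R).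
Hypotheses (HK : is_kernel K) (Hpi : is_policy pi).

Definition td (V : S -> R) s a s' : R := f s a s' + gamma * V s' - V s.

Local Notation V := (Vfun gamma K pi f).
Local Notation Q := (Qfun gamma K pi f).

Lemma Qfun_bellman s a : Q s a = kernel_mean K (fun s a s' => f s a s' + gamma * V s') s a.
Proof.
have sum_sa (g : S -> A -> R) :
    \sum_s0 \sum_a0 ((s0 == s) && (a0 == a))%:R * g s0 a0 = g s a.
  rewrite pair_big /= -(sum_indicatorM (s, a) (fun p => g p.1 p.2)).
  by apply: eq_bigr => -[s0 a0] _; rewrite xpair_eqE.
have law1 : sa_law K pi (fun s0 a0 => ((s0 == s) && (a0 == a))%:R) 1 =
    fun s0 a0 => \sum_s' K s a s' * ((s0 == s')%:R * pi s0 a0).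
  apply/funext => s0; apply/funext => a0 /=.
  rewrite (sum_sa (fun s1 a1 => K s1 a1 s0)) -(sum_indicatorM s0 (fun s' => K s a s' * pi s0 a0)).
  by apply: eq_bigr => s' _; rewrite [s0 == s']eq_sym; ring.
rewrite /Qfun disc_return_first_step // sum_sa law1 disc_return_lincomb //.
rewrite /kernel_mean mulr_sumr -big_split /=; apply: eq_bigr => s' _.
by rewrite /Vfun; ring.
Qed.

Lemma Vfun_Qfun s : V s = \sum_a pi s a * Q s a.
Proof.
rewrite /Vfun /Qfun -disc_return_lincomb //; congr disc_return.
apply/funext => s0; apply/funext => a0; case: eqP => [->|_] /=.
  by rewrite mul1r -(sum_indicatorM a0 (pi s)); apply: eq_bigr => a _; rewrite eq_sym mulrC.
by rewrite mul0r big1 // => a _; rewrite mulr0.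
Qed.

Lemma Afun_td s a : Afun gamma K pi f s a = kernel_mean K (td V) s a.
Proof.
rewrite /Afun Qfun_bellman /kernel_mean /td.
under [RHS]eq_bigr do rewrite mulrBr.
by rewrite sumrB -mulr_suml (HK s a).2 mul1r.
Qed.

Lemma step_mean_td_Vfun s : step_mean pi K (td V) s = 0.
Proof.
rewrite /step_mean; under eq_bigr do rewrite -Afun_td /Afun mulrBr.
by rewrite sumrB -Vfun_Qfun -mulr_suml (Hpi s).2 mul1r subrr.
Qed.

Lemma step_mean_td (sigma : S -> A -> R) (U : S -> R) s : is_policy sigma ->
  step_mean sigma K (td U) s =
  step_mean sigma K f s + gamma * \sum_s' state_kernel sigma K s s' * U s' - U s.
Proof.
move=> Hsigma.
have km_td a : kernel_mean K (td U) s a =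
    kernel_mean K f s a + gamma * \sum_s' K s a s' * U s' - U s.
  rewrite /kernel_mean /td (eq_bigr (fun s' => K s a s' * f s a s' +
     gamma * (K s a s' * U s') - U s * K s a s')) => [|s' _]; last by ring.
  by rewrite sumrB big_split /= -!mulr_sumr (HK s a).2 mulr1.
rewrite /step_mean (eq_bigr (fun a => sigma s a * kernel_mean K f s a +
    gamma * (sigma s a * \sum_s' K s a s' * U s') - U s * sigma s a)) => [|a _]; last first.
  by rewrite km_td; ring.
rewrite sumrB big_split /= -!mulr_sumr (Hsigma s).2 mulr1.
congr (_ + _ * _ - _); under [LHS]eq_bigr => a _ do rewrite mulr_sumr.
rewrite exchange_big /=; apply: eq_bigr => s' _.
by rewrite /state_kernel mulr_suml; apply: eq_bigr => a _; rewrite mulrA.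
Qed.

End Bellman.

Section StateOccupancy.
Variables (R : realType) (S A : finType) (gamma : R).
Hypotheses (gamma_ge0 : 0 <= gamma) (gamma_lt1 : gamma < 1).
Variables (K : S -> A -> S -> R) (pi : S -> A -> R) (mu : S -> R).
Hypotheses (HK : is_kernel K) (Hpi : is_policy pi) (Hmu : is_distr mu).

Local Notation rho0 := (fun s a => mu s * pi s a).

Definition socc s : R := \sum_a occ gamma K pi rho0 s a.

Let inflow s' := \sum_s \sum_a occ gamma K pi rho0 s a * K s a s'.

Let occ_inflow s a : occ gamma K pi rho0 s a = (mu s + gamma * inflow s) * pi s a.
Proof. by rewrite occ_flow //= mulrDl. Qed.

Let socc_inflow s : socc s = mu s + gamma * inflow s.
Proof.
by rewrite /socc; under eq_bigr do rewrite occ_inflow; rewrite -mulr_sumr (Hpi s).2 mulr1.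
Qed.

Lemma occ_socc s a : occ gamma K pi rho0 s a = socc s * pi s a.
Proof. by rewrite occ_inflow socc_inflow. Qed.

Lemma socc_flow s' : socc s' = mu s' + gamma * \sum_s socc s * state_kernel pi K s s'.
Proof.
rewrite socc_inflow; congr (_ + _ * _); apply: eq_bigr => s _.
by rewrite /state_kernel mulr_sumr; apply: eq_bigr => a _; rewrite occ_socc mulrA.
Qed.

Lemma socc_ge0 s : 0 <= socc s.
Proof.
apply: sumr_ge0 => a _; apply: occ_ge0 => // s0 a0.
by rewrite mulr_ge0 ?Hmu.1 ?(Hpi s0).1.
Qed.

Lemma socc_mass : \sum_s socc s = (1 - gamma)^-1.
Proof.
have mass_fix : \sum_s socc s = 1 + gamma * \sum_s socc s.
  rewrite {1}(eq_bigr _ (fun s' _ => socc_flow s')) big_split /= Hmu.2 -mulr_sumr.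
  rewrite exchange_big /=; congr (_ + _ * _); apply: eq_bigr => s _.
  by rewrite -mulr_sumr state_kernel_sum1 ?mulr1.
have gamma_neq1 : 1 - gamma != 0 by rewrite subr_eq0 gt_eqF.
apply: (mulfI gamma_neq1); rewrite mulfV //; lra.
Qed.

Lemma dstate_socc s : dstate gamma K mu pi s = (1 - gamma) * socc s.
Proof.
rewrite /dstate /socc; congr (_ * _); under eq_fun do rewrite mulr_sumr.
by rewrite lim_series_sum // => a; exact: is_cvg_occ.
Qed.

Lemma Jret_socc f : Jret gamma K mu pi f = \sum_s socc s * step_mean pi K f s.
Proof.
rewrite /Jret disc_return_occ //; apply: eq_bigr => s _.
by rewrite mulr_sumr; apply: eq_bigr => a _; rewrite occ_socc; ring.
Qed.

Lemma socc_next (U : S -> R) :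
  gamma * \sum_s socc s * \sum_s' state_kernel pi K s s' * U s' =
  \sum_s socc s * U s - \sum_s mu s * U s.
Proof.
rewrite -sumrB; transitivity (\sum_s' (gamma * \sum_s socc s * state_kernel pi K s s') * U s').
  under [RHS]eq_bigr do rewrite mulr_sumr mulr_suml.
  rewrite [RHS]exchange_big mulr_sumr; apply: eq_bigr => s _.
  by rewrite !mulr_sumr; apply: eq_bigr => s' _; ring.
by apply: eq_bigr => s' _; rewrite [socc s']socc_flow; ring.
Qed.

Lemma Jret_td f (U : S -> R) :
  Jret gamma K mu pi f = \sum_s mu s * U s + \sum_s socc s * step_mean pi K (td gamma f U) s.
Proof.
rewrite Jret_socc; under [X in _ + X]eq_bigr do rewrite step_mean_td //.
rewrite [X in _ = _ + X](eq_bigr (fun s => socc s * step_mean pi K f s +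
    gamma * (socc s * \sum_s' state_kernel pi K s s' * U s') - socc s * U s)) => [|s _].
  by rewrite sumrB big_split /= -mulr_sumr socc_next; ring.
by ring.
Qed.

End StateOccupancy.

Lemma norm_sum_mul_le (R : numDomainType) (T : finType) (w y : T -> R) (b : R) :
  (forall x, `|y x| <= b) -> `|\sum_x w x * y x| <= (\sum_x `|w x|) * b.
Proof.
move=> y_le; apply: le_trans (ler_norm_sum _ _ _) _; rewrite mulr_suml.
by apply: ler_sum => x _; rewrite normrM ler_wpM2l.
Qed.

Lemma flow_l1_perturbation (R : realFieldType) (T : finType) (gamma B : R)
    (mu n1 n2 : T -> R) (k1 k2 : T -> T -> R) :
  0 <= gamma ->
  (forall y, n1 y = mu y + gamma * \sum_x n1 x * k1 x y) ->
  (forall y, n2 y = mu y + gamma * \sum_x n2 x * k2 x y) ->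
  (forall x y, 0 <= k1 x y) -> (forall x, \sum_y k1 x y = 1) ->
  (forall x, 0 <= n2 x) ->
  (forall x, \sum_y `|k1 x y - k2 x y| <= B) ->
  (1 - gamma) * \sum_x `|n1 x - n2 x| <= gamma * B * \sum_x n2 x.
Proof.
move=> gamma_ge0 n1_flow n2_flow k1_ge0 k1_sum1 n2_ge0 k_le.
have diff_le y : `|n1 y - n2 y| <=
    gamma * (\sum_x `|n1 x - n2 x| * k1 x y + \sum_x n2 x * `|k1 x y - k2 x y|).
  have -> : n1 y - n2 y =
      gamma * (\sum_x (n1 x - n2 x) * k1 x y + \sum_x n2 x * (k1 x y - k2 x y)).
    rewrite -big_split /= (eq_bigr (fun x => n1 x * k1 x y - n2 x * k2 x y)) => [|x _].
      by rewrite sumrB {1}n1_flow n2_flow; ring.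
    by ring.
  rewrite normrM ger0_norm // ler_wpM2l //; apply: le_trans (ler_normD _ _) _.
  apply: lerD; apply: le_trans (ler_norm_sum _ _ _) _; apply: ler_sum => x _.
    by rewrite normrM (ger0_norm (k1_ge0 x y)).
  by rewrite normrM (ger0_norm (n2_ge0 x)).
have l1_le : \sum_y `|n1 y - n2 y| <=
    gamma * (\sum_x `|n1 x - n2 x| + B * \sum_x n2 x).
  apply: le_trans (ler_sum _ (fun y _ => diff_le y)) _.
  rewrite -mulr_sumr ler_wpM2l // big_split /= exchange_big /=.
  apply: lerD; first by under eq_bigr do rewrite -mulr_sumr k1_sum1 mulr1.
  rewrite exchange_big /= mulr_sumr; apply: ler_sum => x _.
  by rewrite -mulr_sumr mulrC ler_wpM2r.
lra.
Qed.

Lemma sum_norm_distr (R : realType) (T : finType) (p : T -> R) :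
  is_distr p -> \sum_x `|p x| = 1.
Proof. by case=> p_ge0 p_sum1; rewrite -p_sum1; apply: eq_bigr => x _; rewrite ger0_norm. Qed.

Lemma sum_absB_dTV (R : realType) (T : finType) (p q : T -> R) :
  \sum_x `|p x - q x| = 2 * dTV p q.
Proof. by rewrite /dTV mulrA divff ?mul1r // pnatr_eq0. Qed.

Section OccupancyPerturbation.
Variables (R : realType) (S A : finType) (gamma : R).
Hypotheses (gamma_ge0 : 0 <= gamma) (gamma_lt1 : gamma < 1).

Lemma socc_l1_diff (K1 K2 : S -> A -> S -> R) (pi1 pi2 : S -> A -> R) (mu : S -> R) (c b : R) :
  is_kernel K1 -> is_kernel K2 -> is_policy pi1 -> is_policy pi2 -> is_distr mu ->
  (forall s, \sum_a `|pi1 s a - pi2 s a| <= c) ->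
  (forall s a, \sum_s' `|K1 s a s' - K2 s a s'| <= b) ->
  \sum_s `|socc gamma K1 pi1 mu s - socc gamma K2 pi2 mu s| <= gamma * (c + b) / (1 - gamma) ^+ 2.
Proof.
move=> HK1 HK2 Hpi1 Hpi2 Hmu pi_le K_le.
have gamma_gt0 : 0 < 1 - gamma by rewrite subr_gt0.
have := @flow_l1_perturbation _ _ gamma (c + b) mu _ _ _ _ gamma_ge0
  (socc_flow gamma_ge0 gamma_lt1 mu HK1 Hpi1) (socc_flow gamma_ge0 gamma_lt1 mu HK2 Hpi2)
  (fun s s' => state_kernel_ge0 s s' HK1 Hpi1) (fun s => state_kernel_sum1 s HK1 Hpi1)
  (socc_ge0 gamma_ge0 gamma_lt1 HK2 Hpi2 Hmu)
  (fun s => state_kernel_l1_diff HK1 Hpi2 (pi_le s) (K_le s)).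
rewrite socc_mass // => l1_le.
by rewrite expr2 invfM mulrA ler_pdivlMr // mulrC.
Qed.

End OccupancyPerturbation.

Section SurrogateGap.
Variables (R : realType) (S A : finType) (gamma : R).
Hypotheses (gamma_ge0 : 0 <= gamma) (gamma_lt1 : gamma < 1).
Variables (P Pm : S -> A -> S -> R) (mu : S -> R) (pi pi' : S -> A -> R).
Variable f : S -> A -> S -> R.
Hypotheses (HP : is_kernel P) (HPm : is_kernel Pm) (Hmu : is_distr mu).
Hypotheses (Hpi : is_policy pi) (Hpi' : is_policy pi').

Local Notation d := (td gamma f (Vfun gamma Pm pi f)).
Local Notation dpi := (fun s a => pi' s a - pi s a).
Local Notation dP := (fun s a s' => P s a s' - Pm s a s').
Local Notation ep := (eps_pi pi pi').
Local Notation em := (eps_m P Pm).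
Local Notation dm := (delta_max gamma Pm pi f).
Local Notation n1 := (socc gamma P pi' mu).
Local Notation n0 := (socc gamma P pi mu).
Local Notation nm := (socc gamma Pm pi mu).

Lemma Lsurr_socc :
  Lsurr gamma Pm mu pi pi' f = (1 - gamma) * \sum_s nm s * step_mean pi' Pm d s.
Proof.
rewrite /Lsurr mulr_sumr; apply: eq_bigr => s _.
rewrite dstate_socc // -mulrA; congr (_ * (_ * _)).
by apply: eq_bigr => a _; rewrite Afun_td.
Qed.

Lemma surrogate_gap_decomposition :
  Jret gamma P mu pi' f - Jret gamma P mu pi f - Lsurr gamma Pm mu pi pi' f / (1 - gamma) =
  \sum_s n1 s * step_mean dpi dP d s + \sum_s (n1 s - n0 s) * step_mean pi dP d s
  + \sum_s (n1 s - nm s) * step_mean dpi Pm d s.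
Proof.
have gamma_neq1 : 1 - gamma != 0 by rewrite subr_eq0 gt_eqF.
rewrite (Jret_td gamma_ge0 gamma_lt1 mu HP Hpi' f (Vfun gamma Pm pi f)).
rewrite (Jret_td gamma_ge0 gamma_lt1 mu HP Hpi f (Vfun gamma Pm pi f)) Lsurr_socc.
transitivity (\sum_s (n1 s * step_mean pi' P d s - n0 s * step_mean pi P d s
                      - nm s * step_mean pi' Pm d s)).
  by rewrite !sumrB; field.
rewrite -!big_split /=; apply: eq_bigr => s _.
by rewrite !step_meanBl !step_meanBr step_mean_td_Vfun //; ring.
Qed.

Lemma eps_pi_ge0 : 0 <= ep. Proof. exact: bigmax_ge_id. Qed.
Lemma eps_m_ge0 : 0 <= em. Proof. exact: bigmax_ge_id. Qed.
Lemma delta_max_ge0 : 0 <= dm. Proof. exact: bigmax_ge_id. Qed.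

Lemma sum_abs_dpi_le s : \sum_a `|pi' s a - pi s a| <= 2 * ep.
Proof. by rewrite sum_absB_dTV ler_wpM2l // (le_bigmax _ (fun s => dTV (pi' s) (pi s))). Qed.

Lemma sum_abs_dP_le s a : \sum_s' `|P s a s' - Pm s a s'| <= 2 * em.
Proof.
rewrite sum_absB_dTV ler_wpM2l //.
exact: (le_bigmax _ (fun sa : S * A => dTV (P sa.1 sa.2) (Pm sa.1 sa.2)) (s, a)).
Qed.

Lemma norm_td_le s a s' : `|d s a s'| <= dm.
Proof.
exact: (le_bigmax _ (fun x : S * A * S => `|f x.1.1 x.1.2 x.2
  + gamma * Vfun gamma Pm pi f x.2 - Vfun gamma Pm pi f x.1.1|) (s, a, s')).
Qed.

Lemma norm_step_mean_dpi_dP_le s : `|step_mean dpi dP d s| <= 2 * ep * (2 * em) * dm.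
Proof.
apply: norm_step_mean_le; rewrite ?mulr_ge0 ?eps_m_ge0 ?delta_max_ge0 //.
- exact: sum_abs_dpi_le.
- exact: sum_abs_dP_le.
- exact: norm_td_le.
Qed.

Lemma norm_step_mean_pi_dP_le s : `|step_mean pi dP d s| <= 2 * em * dm.
Proof.
rewrite -[2 * em]mul1r; apply: norm_step_mean_le; rewrite ?mulr_ge0 ?eps_m_ge0 ?delta_max_ge0 //.
- by rewrite sum_norm_distr.
- exact: sum_abs_dP_le.
- exact: norm_td_le.
Qed.

Lemma norm_step_mean_dpi_Pm_le s : `|step_mean dpi Pm d s| <= 2 * ep * dm.
Proof.
rewrite -[2 * ep]mulr1; apply: norm_step_mean_le; rewrite ?delta_max_ge0 //.
- exact: sum_abs_dpi_le.
- by move=> a; rewrite sum_norm_distr.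
- exact: norm_td_le.
Qed.

Lemma socc_l1_diff_policy : \sum_s `|n1 s - n0 s| <= gamma * (2 * ep) / (1 - gamma) ^+ 2.
Proof.
rewrite -[2 * ep]addr0; apply: socc_l1_diff => //; first exact: sum_abs_dpi_le.
by move=> s a; rewrite big1 // => s' _; rewrite subrr normr0.
Qed.

Lemma socc_l1_diff_model :
  \sum_s `|n1 s - nm s| <= gamma * (2 * ep + 2 * em) / (1 - gamma) ^+ 2.
Proof. by apply: socc_l1_diff => //; [exact: sum_abs_dpi_le | exact: sum_abs_dP_le]. Qed.

Lemma surrogate_gap_le :
  `|Jret gamma P mu pi' f - Jret gamma P mu pi f - Lsurr gamma Pm mu pi pi' f / (1 - gamma)|
  <= 4 * dm * eps_total gamma P Pm pi pi' / (1 - gamma).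
Proof.
have ep_ge0 := eps_pi_ge0; have em_ge0 := eps_m_ge0; have dm_ge0 := delta_max_ge0.
have gamma_neq1 : 1 - gamma != 0 by rewrite subr_eq0 gt_eqF.
have n1_l1 : \sum_s `|n1 s| = (1 - gamma)^-1.
  rewrite -(socc_mass gamma_ge0 gamma_lt1 HP Hpi' Hmu).
  by apply: eq_bigr => s _; rewrite ger0_norm ?socc_ge0.
rewrite surrogate_gap_decomposition.
apply: le_trans (ler_normD _ _) _; apply: le_trans (lerD (ler_normD _ _) (lexx _)) _.
apply: le_trans (lerD (lerD (norm_sum_mul_le _ norm_step_mean_dpi_dP_le)
  (norm_sum_mul_le _ norm_step_mean_pi_dP_le)) (norm_sum_mul_le _ norm_step_mean_dpi_Pm_le)) _.
rewrite n1_l1 (_ : 4 * dm * eps_total gamma P Pm pi pi' / (1 - gamma) =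
    (1 - gamma)^-1 * (2 * ep * (2 * em) * dm)
    + gamma * (2 * ep) / (1 - gamma) ^+ 2 * (2 * em * dm)
    + gamma * (2 * ep + 2 * em) / (1 - gamma) ^+ 2 * (2 * ep * dm)); last first.
  by rewrite /eps_total; field.
rewrite !lerD // ler_wpM2r ?mulr_ge0 //; [exact: socc_l1_diff_policy | exact: socc_l1_diff_model].
Qed.

Lemma two_sided_bound_of_surrogate_gap : two_sided_bound gamma P Pm mu pi pi' f.
Proof.
move: surrogate_gap_le; rewrite ler_norml /two_sided_bound /=.
set dJ := _ - Jret _ _ _ _ _; set L := Lsurr _ _ _ _ _ _ / _; set err := 4 * _ * _ / _.
by move=> /andP[lo hi]; split; lra.
Qed.

End SurrogateGap.

Unset Implicit Arguments.

Theorem mainTheorem1 (R : realType) (S A : finType)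
    (r : S -> A -> S -> R) (k : nat) (c : 'I_k -> S -> A -> S -> R)
    (P : S -> A -> S -> R) (mu : S -> R) (D : 'I_k -> R)
    (gamma : R) (Pm : S -> A -> S -> R) (pi pi' : S -> A -> R) :
  is_kernel P -> is_distr mu -> 0 <= gamma -> gamma < 1 ->
  is_kernel Pm -> is_policy pi -> is_policy pi' ->
  two_sided_bound gamma P Pm mu pi pi' r /\
  (forall i : 'I_k, two_sided_bound gamma P Pm mu pi pi' (c i)).
Proof.
move=> HP Hmu gamma_ge0 gamma_lt1 HPm Hpi Hpi'.
by split=> [|i]; exact: two_sided_bound_of_surrogate_gap.
Qed.
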